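(* Let $p\in(0,1)$, let $d_p\in(0,1)$ be the $(1-p)$-quantile of $K_{\hat\vartheta}=\sup_{x\in\mathbb{R}}|F_{\hat\vartheta}(x)-F_\vartheta(x)|$, and define $$C_4'=\Big\{\tilde\vartheta\in\Theta:\ \sup_{x\in\mathbb{R}}|F_{\tilde\vartheta}(x)-F_{\hat\vartheta}(x)|\le d_p\Big\},\qquad C_4''=\{(\mu,\sigma)\in C_4':\ \mu\le\hat\mu\}.$$ Let $h:(0,\infty)\to\mathbb{R}$, $h(x)=\ln\big(\frac{d_p}{|1-x|}\big)(x-1)+x\ln x$ for $x\ne1$ and $h(1)=0$, and for $x>0$ $$u(x)=\begin{cases}h(x),&x<1-d_p\\ x\ln(1-d_p),&x\ge1-d_p\end{cases},\qquad o(x)=\begin{cases}-\ln(1-d_p),&x\le\frac1{1-d_p}\\ h(x),&x>\frac1{1-d_p}\end{cases}.$$ Then $$C_4'=\Big\{(\mu,\sigma)\in\Theta:\ u\big(\tfrac{\hat\sigma}{\sigma}\big)\le\frac{\hat\mu-\mu}{\sigma}\le o\big(\tfrac{\hat\sigma}{\sigma}\big)\Big\},$$ $$C_4''=\Big\{(\mu,\sigma)\in\Theta:\ \max\big\{u\big(\tfrac{\hat\sigma}{\sigma}\big),0\big\}\le\frac{\hat\mu-\mu}{\sigma}\le o\big(\tfrac{\hat\sigma}{\sigma}\big)\Big\}.$$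
   Context: Let $1<m\le n$ be integers and $(R_1,\dots,R_m)\in\mathbb{N}_0^m$ with $\sum_{j=1}^mR_j=n-m$; set $\gamma_j=\sum_{i=j}^m(R_i+1)$. A sample of progressively type-II censored order statistics $X=(X_{1:m:n},\dots,X_{m:m:n})$ from an absolutely continuous cdf $F$ with density $f$ has joint density $\prod_{j=1}^m\gamma_jf(x_j)[1-F(x_j)]^{R_j}$ on $x_1\le\dots\le x_m$. Here $F=F_\vartheta$ belongs to the exponential location-scale family: for $\vartheta=(\mu,\sigma)\in\Theta=\mathbb{R}\times(0,\infty)$, $F_\vartheta(x)=1-\exp\{-(x-\mu)/\sigma\}$ for $x>\mu$ and $F_\vartheta(x)=0$ for $x\le\mu$; $\vartheta$ is unknown. The MLEs are $\hat\mu=X_{1:m:n}$ and $\hat\sigma=\frac1m\sum_{j=2}^m\gamma_j(X_{j:m:n}-X_{j-1:m:n})$, and $\hat\vartheta=(\hat\mu,\hat\sigma)$. The distribution of $K_{\hat\vartheta}$ does not depend on $\vartheta$. *)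

From HB Require Import structures.
From mathcomp Require Import all_boot all_order all_algebra.
From mathcomp Require Import all_classical all_reals all_analysis.
Set Implicit Arguments. Unset Strict Implicit. Unset Printing Implicit Defensive.
Import Order.TTheory GRing.Theory Num.Theory.
Local Open Scope classical_set_scope.
Local Open Scope ring_scope.

Section Defs.
Variable R : realType.

(* cdf of the two-parameter exponential distribution Exp(mu, sigma) *)
Definition Fexp (mu sigma x : R) : R :=
  if x <= mu then 0 else 1 - expR (- ((x - mu) / sigma)).

Definition supdist (mu1 s1 mu2 s2 : R) : R :=
  sup [set `|Fexp mu1 s1 x - Fexp mu2 s2 x| | x in [set: R]].

Definition Theta : set (R * R) := [set th | 0 < th.2].

Definition C4' (d muh sh : R) : set (R * R) :=
  [set th | th \in Theta /\ supdist th.1 th.2 muh sh <= d].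

Definition C4'' (d muh sh : R) : set (R * R) :=
  [set th | th \in C4' d muh sh /\ th.1 <= muh].

Definition hfun (d x : R) : R :=
  if x == 1 then 0 else ln (d / `|1 - x|) * (x - 1) + x * ln x.

Definition ufun (d x : R) : R :=
  if x < 1 - d then hfun d x else x * ln (1 - d).

Definition ofun (d x : R) : R :=
  if x <= (1 - d)^-1 then - ln (1 - d) else hfun d x.

End Defs.

From HB Require Import structures.
From mathcomp Require Import all_boot all_order all_algebra.
From mathcomp Require Import all_classical all_reals all_analysis.
From mathcomp Require Import ring lra.

Set Implicit Arguments. Unset Strict Implicit. Unset Printing Implicit Defensive.
Import Order.TTheory GRing.Theory Num.Theory.
Local Open Scope classical_set_scope.
Local Open Scope ring_scope.

(* Writing F_(mu,s)(x) = G((x - mu)/s) with G the standard exponential cdf, the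
   substitution x = muh + s w turns sup_x |F_(mu,s) - F_(muh,sh)| <= d into
     sup_w |G(w + t) - G(w / a)| <= d,   t = (muh - mu)/s,  a = sh/s.
   The absolute value splits into two one-sided bounds.  The bound
   sup_w (G(w + t) - G(w / a)) <= d is shown equivalent to t <= o(a): for w >= 0
   the difference is the gap exp(-w/a) - exp(-(w+t)), which convexity of expR bounds
   by (1 - 1/a) exp((t - ln a)/(a - 1)) when a > 1, a value attained at an explicit w
   and compared with d through the curve h; the other cases reduce to the tail
   condition t <= -ln(1-d) obtained at w = 0.  The reverse one-sided bound is the
   direct one for the parameters (1/a, -t/a), and u(a) = -a o(1/a) turns it into
   u(a) <= t. *)

Section ExponentialKolmogorovBall.
Variable R : realType.
Implicit Types (a d t w z : R).

(* The standard exponential cdf; every Fexp mu s is an affine reparametrization of it. *)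
Definition Fstd z : R := if z <= 0 then 0 else 1 - expR (- z).

Lemma Fstd_nonpos z : z <= 0 -> Fstd z = 0.
Proof. by rewrite /Fstd => ->. Qed.

Lemma Fstd_nonneg z : 0 <= z -> Fstd z = 1 - expR (- z).
Proof.
rewrite /Fstd le_eqVlt => /orP[/eqP<-|z0]; first by rewrite lexx oppr0 expR0 subrr.
by rewrite leNgt z0.
Qed.

Lemma Fstd_ge0 z : 0 <= Fstd z.
Proof.
rewrite /Fstd; case: ifPn => //.
by rewrite -ltNge subr_ge0 expR_le1 oppr_le0 => /ltW.
Qed.

Lemma Fstd_le1 z : Fstd z <= 1.
Proof.
rewrite /Fstd; case: ifP => _; first exact: ler01.
by rewrite gerBl expR_ge0.
Qed.

Lemma Fstd_leE d z : 0 <= d -> (Fstd z <= d) = (1 - expR (- z) <= d).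
Proof.
move=> d0; case: (lerP z 0) => z0; last by rewrite Fstd_nonneg // ltW.
have -> : 1 - expR (- z) <= d.
  by apply: le_trans d0; rewrite subr_le0 -expR0 ler_expR oppr_ge0.
by rewrite Fstd_nonpos.
Qed.

Lemma tail_condE d t : 0 < d < 1 -> (t <= - ln (1 - d)) = (1 - expR (- t) <= d).
Proof.
move=> /andP[d0 d1].
rewrite lerNr -{1}(expRK (- t)) ler_ln ?posrE ?expR_gt0 ?subr_gt0 //.
by apply/idP/idP; lra.
Qed.

Lemma expR_convex (l A B : R) : 0 <= l <= 1 ->
  expR (l * A + (1 - l) * B) <= l * expR A + (1 - l) * expR B.
Proof.
move=> /andP[l0 l1].
by have := convex_expR (Itv01 l0 l1) A B; rewrite !convRE.
Qed.

(* Difference of the survival functions exp(-w/a) and exp(-(w+t)); for w, w+t >= 0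
   it equals Fstd (w + t) - Fstd (w / a). *)
Definition expgap a t w : R := expR (- (w / a)) - expR (- (w + t)).

(* For a > 1 the gap is maximal where -(w/a) equals gap_exponent a t, with value
   gap_max a t. *)
Definition gap_exponent a t : R := (t - ln a) / (a - 1).
Definition gap_max a t : R := (1 - a^-1) * expR (gap_exponent a t).

(* Convexity of expR bounds the gap by its maximum. *)
Lemma expgap_le_max a t w : 1 < a -> expgap a t w <= gap_max a t.
Proof.
move=> a1; have a0 : 0 < a by lra.
have ia : 0 <= a^-1 <= 1 by rewrite invr_ge0 invf_le1 // (ltW a0) (ltW a1).
have := expR_convex (- (w + t) + ln a) (gap_exponent a t) ia.
have -> : a^-1 * (- (w + t) + ln a) + (1 - a^-1) * gap_exponent a t = - (w / a).
  by rewrite /gap_exponent; field; apply/andP; split; lra.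
rewrite expRD lnK ?posrE // mulrCA mulVf ?mulr1; last lra.
by rewrite /expgap /gap_max; lra.
Qed.

Lemma expgap_argmax a t : 1 < a ->
  expgap a t (- (a * gap_exponent a t)) = gap_max a t.
Proof.
move=> a1; have a0 : 0 < a by lra.
rewrite /expgap /gap_max.
have -> : - (- (a * gap_exponent a t) / a) = gap_exponent a t by field; lra.
have -> : - (- (a * gap_exponent a t) + t) = gap_exponent a t - ln a.
  by rewrite /gap_exponent; field; lra.
by rewrite expRB lnK ?posrE //; field; lra.
Qed.

(* Convexity of expR between -w and 0: when t >= ln a, the gap on w >= 0 is at most
   the tail probability 1 - exp(-t). *)
Lemma expgap_chord a t w : 1 < a -> ln a <= t -> 0 <= w ->
  expgap a t w <= 1 - expR (- t).
Proof.
move=> a1 lat w0; have a0 : 0 < a by lra.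
have ia : 0 <= a^-1 <= 1 by rewrite invr_ge0 invf_le1 // (ltW a0) (ltW a1).
have := expR_convex (- w) 0 ia.
rewrite mulr0 addr0 expR0 mulr1 mulrN mulrC -/(w / a) => chord.
have et : expR (- t) <= a^-1.
  by rewrite -(lnK (x := a)) ?posrE // -expRN ler_expR lerN2.
have ew : expR (- w) <= 1 by rewrite expR_le1 oppr_le0.
have := expR_gt0 (- w); rewrite /expgap opprD expRD; nra.
Qed.

Lemma expgap_contract a d t w : 0 < a <= 1 -> 0 <= w -> 0 <= d ->
  1 - expR (- t) <= d -> expgap a t w <= d.
Proof.
move=> /andP[a0 a1] w0 d0 tail.
have ewa : expR (- (w / a)) <= expR (- w).
  by rewrite ler_expR lerN2 ler_pdivlMr //; nra.
have ew : expR (- w) <= 1 by rewrite expR_le1 oppr_le0.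
have := expR_gt0 (- w); have := expR_gt0 (- t).
rewrite /expgap opprD expRD; nra.
Qed.

Lemma gap_max_leE d a t : 0 < d -> 1 < a -> (gap_max a t <= d) = (t <= hfun d a).
Proof.
move=> d0 a1; have a0 : 0 < a by lra.
rewrite /gap_max /gap_exponent /hfun ifF; last by apply/negbTE; rewrite gt_eqF.
rewrite ltr0_norm ?subr_lt0 // opprB.
have -> : 1 - a^-1 = (a - 1) / a by field; lra.
rewrite mulrC -ler_pdivlMr ?divr_gt0 ?subr_gt0 //.
rewrite -[expR _ <= _](ler_ln (x := expR _)) ?posrE ?expR_gt0 ?divr_gt0 ?subr_gt0 //.
rewrite expRK.
have -> : d / ((a - 1) / a) = a * (d / (a - 1)) by field; apply/andP; split; lra.
rewrite lnM ?posrE ?divr_gt0 ?subr_gt0 // ler_pdivrMr ?subr_gt0 //.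
by apply/idP/idP; nra.
Qed.

Lemma ofun_tail d a t : 0 < d < 1 -> t <= ofun d a -> 1 - expR (- t) <= d.
Proof.
move=> dd; rewrite -tail_condE // /ofun; case: ifPn => [_ //|].
have /andP[d0 d1] := dd; rewrite -ltNge => ha.
have a1 : 1 < a by apply: le_lt_trans ha; rewrite invf_ge1 ?subr_gt0; lra.
rewrite -gap_max_leE // tail_condE // => Ho.
by have := expgap_le_max t 0 a1; rewrite /expgap mul0r oppr0 expR0 add0r; lra.
Qed.

(* On w >= 0 the gap stays below d whenever t <= o(a): for a <= 1 by contraction, for
   a > 1/(1-d) by the maximal gap, and in between by the maximal gap if t <= ln a and
   by the chord bound otherwise. *)
Lemma expgap_le_level d a t w : 0 < d < 1 -> 0 < a -> 0 <= w ->
  t <= ofun d a -> expgap a t w <= d.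
Proof.
move=> dd a0 w0 Ho; have /andP[d0 d1] := dd.
have tail := ofun_tail dd Ho.
have [a1|a1] := lerP a 1.
  by apply: expgap_contract w0 (ltW d0) tail; rewrite a0 a1.
have [ad|ad] := lerP a (1 - d)^-1; last first.
  move: Ho; rewrite /ofun (leNgt a) ad /= -gap_max_leE // => Ho.
  exact: le_trans (expgap_le_max t w a1) Ho.
have [tl|tl] := lerP t (ln a); last exact: le_trans (expgap_chord a1 (ltW tl) w0) tail.
apply: le_trans (expgap_le_max t w a1) _.
have e1 : expR (gap_exponent a t) <= 1.
  by rewrite expR_le1 /gap_exponent ler_pdivrMr ?subr_gt0 // mul0r subr_le0.
have da : 1 - d <= a^-1.
  by rewrite -(invrK (1 - d)) lef_pV2 ?posrE ?invr_gt0 ?subr_gt0.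
have ia : a^-1 < 1 by rewrite invf_lt1.
by have := expR_gt0 (gap_exponent a t); rewrite /gap_max; nra.
Qed.

Definition one_sided_le d a t : Prop := forall w, Fstd (w + t) - Fstd (w / a) <= d.

(* Sufficiency: for w <= 0 only the tail condition matters, for w > 0 the gap bound. *)
Lemma one_sided_sufficient d a t : 0 < d < 1 -> 0 < a ->
  t <= ofun d a -> one_sided_le d a t.
Proof.
move=> dd a0 Ho w; have /andP[d0 d1] := dd.
have tail := ofun_tail dd Ho.
have [w0|w0] := lerP w 0.
  rewrite (@Fstd_nonpos (w / a)) ?subr0; last by rewrite ler_pdivrMr // mul0r.
  rewrite Fstd_leE ?(ltW d0) //; apply: (le_trans _ tail).
  by rewrite lerD2l lerN2 ler_expR; lra.
have [wt|wt] := lerP (w + t) 0.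
  by rewrite Fstd_nonpos // sub0r; have := Fstd_ge0 (w / a); lra.
rewrite !Fstd_nonneg; [|by apply: divr_ge0; apply: ltW | exact: ltW].
by have := expgap_le_level dd a0 (ltW w0) Ho; rewrite /expgap; lra.
Qed.

(* Necessity: w = 0 gives the tail condition, and for a > 1/(1-d) the maximizer of
   the gap lies in w >= 0, which forces t <= h(a). *)
Lemma one_sided_necessary d a t : 0 < d < 1 -> 0 < a ->
  one_sided_le d a t -> t <= ofun d a.
Proof.
move=> dd a0 H; have /andP[d0 d1] := dd.
have tail : t <= - ln (1 - d).
  have := H 0; rewrite add0r mul0r (Fstd_nonpos (lexx 0)) subr0 Fstd_leE ?(ltW d0) //.
  by rewrite tail_condE.
rewrite /ofun; case: ifPn => //; rewrite -ltNge => ha.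
have a1 : 1 < a by apply: le_lt_trans ha; rewrite invf_ge1 ?subr_gt0; lra.
have tla : t < ln a.
  apply: le_lt_trans tail _.
  by rewrite -lnV ?posrE ?subr_gt0 // ltr_ln ?posrE ?invr_gt0 ?subr_gt0 //; lra.
have la : 0 < ln a by rewrite ln_gt0.
rewrite -gap_max_leE // -expgap_argmax //.
set B := gap_exponent a t.
have B0 : B <= 0 by rewrite /B /gap_exponent ler_pdivrMr ?subr_gt0 // mul0r; lra.
have aB : a * B = B + (t - ln a) by rewrite /B /gap_exponent; field; lra.
have wt : 0 <= - (a * B) + t by lra.
have wa : 0 <= - (a * B) / a by apply: divr_ge0; nra.
have := H (- (a * B)); rewrite (Fstd_nonneg wt) (Fstd_nonneg wa).
by rewrite /expgap; lra.
Qed.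

Lemma one_sided_leE d a t : 0 < d < 1 -> 0 < a ->
  one_sided_le d a t <-> t <= ofun d a.
Proof.
move=> dd a0; split; [exact: one_sided_necessary | exact: one_sided_sufficient].
Qed.

(* The reverse one-sided bound is the direct one for the inverse scale ratio,
   after the change of variable w = a * u - t. *)
Lemma one_sided_swap d a t : 0 < a ->
  (forall w, Fstd (w / a) - Fstd (w + t) <= d) <-> one_sided_le d a^-1 (- (t / a)).
Proof.
move=> a0; split => H w.
  have := H (a * w - t).
  have -> : (a * w - t) / a = w + - (t / a) by field; lra.
  by have -> : a * w - t + t = w / a^-1 by field; lra.
have := H ((w + t) / a).
have -> : (w + t) / a + - (t / a) = w / a by field; lra.
by have -> : (w + t) / a / a^-1 = w + t by field; lra.
Qed.

(* h(1/a) = -h(a)/a: the boundary curves u and o are exchanged by the swap above. *)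
Lemma hfun_inv d a : 0 < d -> 0 < a -> hfun d a^-1 = - (hfun d a / a).
Proof.
move=> d0 a0; rewrite /hfun invr_eq1.
have [->|a1] := eqVneq a 1; first by rewrite mul0r oppr0.
have n1a : 0 < `|1 - a| by rewrite normr_gt0 subr_eq0 eq_sym.
have -> : d / `|1 - a^-1| = a * (d / `|1 - a|).
  have -> : 1 - a^-1 = - (1 - a) / a by field; rewrite gt_eqF.
  rewrite normrM normrN (gtr0_norm (x := a^-1)) ?invr_gt0 //.
  by field; apply/andP; split; rewrite gt_eqF.
rewrite lnM ?posrE ?divr_gt0 // lnV ?posrE //.
by field; rewrite gt_eqF.
Qed.

Lemma ufun_ofunV d a : 0 < d < 1 -> 0 < a -> ufun d a = - (a * ofun d a^-1).
Proof.
move=> /andP[d0 d1] a0; rewrite /ufun /ofun.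
rewrite lef_pV2 ?posrE ?subr_gt0 // leNgt.
case: ifP => _; last by rewrite mulrN opprK mulrC.
by rewrite hfun_inv // mulrN opprK mulrC mulfVK // gt_eqF.
Qed.

Lemma std_ball_leE d a t : 0 < d < 1 -> 0 < a ->
  (forall w, `|Fstd (w + t) - Fstd (w / a)| <= d) <-> ufun d a <= t <= ofun d a.
Proof.
move=> dd a0.
have lowerE : (forall w, Fstd (w / a) - Fstd (w + t) <= d) <-> ufun d a <= t.
  rewrite one_sided_swap // one_sided_leE ?invr_gt0 // ufun_ofunV //.
  by rewrite lerNl ler_pdivlMr // mulNr mulrC.
split => [H | /andP[Hu Ho] w].
  apply/andP; split; first by apply/lowerE => w; move: (H w); rewrite ler_norml; lra.
  by apply/(one_sided_leE t dd a0) => w; move: (H w); rewrite ler_norml; lra.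
have := proj2 lowerE Hu w; have := proj2 (one_sided_leE t dd a0) Ho w.
by rewrite ler_norml; lra.
Qed.

Lemma Fexp_Fstd mu s x : 0 < s -> Fexp mu s x = Fstd ((x - mu) / s).
Proof.
by move=> s0; rewrite /Fexp /Fstd ler_pdivrMr // mul0r subr_le0.
Qed.

Lemma supdist_leP mu s muh sh d : 0 < s -> 0 < sh ->
  supdist mu s muh sh <= d <-> forall x, `|Fexp mu s x - Fexp muh sh x| <= d.
Proof.
move=> s0 sh0; split => [H x | H].
  apply: le_trans H; apply: ub_le_sup; last by exists x.
  exists 1 => _ [y _ <-]; rewrite !Fexp_Fstd // ler_norml.
  have := Fstd_ge0 ((y - mu) / s); have := Fstd_le1 ((y - mu) / s).
  have := Fstd_ge0 ((y - muh) / sh); have := Fstd_le1 ((y - muh) / sh).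
  lra.
apply: ge_sup; first by exists `|Fexp mu s 0 - Fexp muh sh 0|, 0.
by move=> _ [x _ <-].
Qed.

(* Substituting x = muh + s * w standardizes the pair (mu, s), (muh, sh) to the
   location shift t = (muh - mu) / s and the scale ratio a = sh / s. *)
Lemma pointwise_dist_std mu s muh sh d : 0 < s -> 0 < sh ->
  (forall x, `|Fexp mu s x - Fexp muh sh x| <= d) <->
  (forall w, `|Fstd (w + (muh - mu) / s) - Fstd (w / (sh / s))| <= d).
Proof.
move=> s0 sh0; split => H w.
  have := H (muh + s * w); rewrite !Fexp_Fstd //.
  have -> : (muh + s * w - mu) / s = w + (muh - mu) / s by field; rewrite gt_eqF.
  by have -> : (muh + s * w - muh) / sh = w / (sh / s)
    by field; apply/andP; split; rewrite gt_eqF.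
have := H ((w - muh) / s); rewrite !Fexp_Fstd //.
have -> : (w - muh) / s + (muh - mu) / s = (w - mu) / s by field; rewrite gt_eqF.
by have -> : (w - muh) / s / (sh / s) = (w - muh) / sh
  by field; apply/andP; split; rewrite gt_eqF.
Qed.

Lemma supdist_leE d mu s muh sh : 0 < d < 1 -> 0 < s -> 0 < sh ->
  supdist mu s muh sh <= d <->
  ufun d (sh / s) <= (muh - mu) / s <= ofun d (sh / s).
Proof.
move=> dd s0 sh0.
by rewrite supdist_leP // pointwise_dist_std // std_ball_leE // divr_gt0.
Qed.

End ExponentialKolmogorovBall.

Theorem theorem4 (R : realType) (d muh sh : R) :
  0 < d < 1 -> 0 < sh ->
  C4' d muh sh =
    [set th : R * R | 0 < th.2 /\
       ufun d (sh / th.2) <= (muh - th.1) / th.2 <= ofun d (sh / th.2)] /\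
  C4'' d muh sh =
    [set th : R * R | 0 < th.2 /\
       Num.max (ufun d (sh / th.2)) 0 <= (muh - th.1) / th.2
       <= ofun d (sh / th.2)].
Proof.
move=> dd sh0.
have C4'E : C4' d muh sh =
    [set th : R * R | 0 < th.2 /\
       ufun d (sh / th.2) <= (muh - th.1) / th.2 <= ofun d (sh / th.2)].
  apply/seteqP; split => -[mu s]; rewrite /C4' /= in_setE /Theta /=;
    by move=> [s0 H]; split => //; apply/supdist_leE.
split => //; apply/seteqP; split => -[mu s]; rewrite /C4'' /= in_setE C4'E /=.
  move=> [[s0 /andP[Hu Ho]] hm]; split => //.
  by rewrite ge_max Hu Ho /= ler_pdivlMr // mul0r subr_ge0 hm.
move=> [s0 /andP[]]; rewrite ge_max => /andP[Hu Ht] Ho.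
split; first by split => //; rewrite Hu Ho.
by move: Ht; rewrite ler_pdivlMr // mul0r subr_ge0.
Qed.
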